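(* Let $B$, $C$ be unital $\mathrm{C}^*$-algebras and let $\phi,\psi\colon B\to C$ be surjective $*$-homomorphisms. Assume that $C$ has trivial center. If $c\in C$ satisfies $\phi(b)c=c\psi(b)$ for all $b\in B$, then either $c$ is invertible or $c=0$. *)

From HB Require Import structures.
From mathcomp Require Import all_boot all_order all_algebra.
From mathcomp Require Import reals.
From mathcomp Require Import complex.
Set Implicit Arguments. Unset Strict Implicit. Unset Printing Implicit Defensive.
Import Order.TTheory GRing.Theory Num.Theory.
Local Open Scope ring_scope.
Local Open Scope complex_scope.

Definition is_unital_Cstar (R : realType) (A : algType R[i])
    (star : A -> A) (nrm : A -> R) : Prop :=
      (forall x, star (star x) = x) /\
      (forall x y, star (x + y) = star x + star y) /\
      (forall (a : R[i]) x, star (a *: x) = a^* *: star x) /\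
      (forall x y, star (x * y) = star y * star x) /\
      (forall x, 0 <= nrm x) /\ (forall x, nrm x = 0 -> x = 0) /\
      (forall x y, nrm (x + y) <= nrm x + nrm y) /\
      (forall (a : R[i]) x, (nrm (a *: x))%:C = `|a| * (nrm x)%:C) /\
      (forall x y, nrm (x * y) <= nrm x * nrm y) /\
      (forall x, nrm (star x * x) = nrm x ^+ 2) /\
      (forall u : nat -> A,
         (forall e : R, 0 < e -> exists N, forall m n, (N <= m)%N -> (N <= n)%N ->
             nrm (u m - u n) < e) ->
         exists l : A, forall e : R, 0 < e -> exists N, forall n, (N <= n)%N ->
             nrm (u n - l) < e).

(* *-homomorphism between *-algebras: complex linear, multiplicative,
   star-preserving (unitality is not required). *)
Definition is_star_hom (R : realType) (A B : algType R[i])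
    (starA : A -> A) (starB : B -> B) (f : A -> B) : Prop :=
  [/\ (forall x y, f (x + y) = f x + f y),
      (forall (a : R[i]) x, f (a *: x) = a *: f x),
      (forall x y, f (x * y) = f x * f y) &
      (forall x, f (starA x) = starB (f x))].

Definition trivial_center (R : realType) (A : algType R[i]) : Prop :=
  forall z : A, (forall x : A, z * x = x * z) -> exists a : R[i], z = a *: 1.

Definition invertible (R : realType) (A : algType R[i]) (c : A) : Prop :=
  exists d : A, c * d = 1 /\ d * c = 1.

From HB Require Import structures.
From mathcomp Require Import all_boot all_order all_algebra.
From mathcomp Require Import reals complex.
Set Implicit Arguments. Unset Strict Implicit. Unset Printing Implicit Defensive.
Import Order.TTheory GRing.Theory Num.Theory.
Local Open Scope ring_scope.

(* c c^* commutes with phi(b) and c^* c with psi(b), since c^* intertwines psi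
   and phi in the other direction; by surjectivity both are central, hence
   scalars a and b.  If a or b is zero, the C*-identity forces c = 0;
   otherwise c has a right inverse a^-1 c^* and a left inverse b^-1 c^*. *)

Section IntertwinerAlgebra.

Variables (B : Type) (C : pzRingType).

Lemma intertwiner_star (starB : B -> B) (starC : C -> C) (phi psi : B -> C) (c : C) :
    involutive starC -> (forall x y, starC (x * y) = starC y * starC x) ->
    (forall b, phi (starB b) = starC (phi b)) ->
    (forall b, psi (starB b) = starC (psi b)) ->
    (forall b, phi b * c = c * psi b) ->
  forall b, starC c * phi b = psi b * starC c.
Proof.
move=> starK starM phi_star psi_star Hc b.
have := congr1 starC (Hc (starB b)).
by rewrite !starM phi_star psi_star !starK.
Qed.

Lemma intertwiners_mul_central (f g : B -> C) (u v : C) :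
    (forall b, f b * u = u * g b) -> (forall b, v * f b = g b * v) ->
    (forall x, exists b, f b = x) ->
  forall x, u * v * x = x * (u * v).
Proof.
move=> Hu Hv f_surj x; have [b <-] := f_surj x.
by rewrite -mulrA Hv mulrA -Hu -mulrA.
Qed.

End IntertwinerAlgebra.

Lemma invertible_of_scalar_products (R : realType) (A : algType R[i]) (c d : A)
    (a b : R[i]) :
    a != 0 -> b != 0 -> c * d = a *: 1 -> d * c = b *: 1 -> invertible c.
Proof.
move=> a_neq0 b_neq0 cd da.
have rinv : c * (a^-1 *: d) = 1 by rewrite -scalerAr cd scalerA mulVf // scale1r.
have linv : (b^-1 *: d) * c = 1 by rewrite -scalerAl da scalerA mulVf // scale1r.
have lr : b^-1 *: d = a^-1 *: d by rewrite -[LHS]mulr1 -rinv mulrA linv mul1r.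
by exists (a^-1 *: d); split; last rewrite -lr.
Qed.

Section CstarAlgebra.

Variables (R : realType) (A : algType R[i]) (star : A -> A) (nrm : A -> R).
Hypothesis HA : is_unital_Cstar star nrm.

Lemma Cstar_nrm0 : nrm 0 = 0.
Proof.
have [_ [_ [_ [_ [_ [_ [_ [nrmZ _]]]]]]]] := HA.
have := nrmZ 0 0; rewrite scale0r normr0 mul0r => nrm0C.
exact: (congr1 (@complex.Re R) nrm0C).
Qed.

Lemma Cstar_star0 : star 0 = 0.
Proof.
have [_ [starD _]] := HA.
by apply: (addrI (star 0)); rewrite -starD !addr0.
Qed.

Lemma Cstar_star_mul_eq0 (x : A) : star x * x = 0 -> x = 0.
Proof.
have [_ [_ [_ [_ [_ [nrm_eq0 [_ [_ [_ [nrm_star _]]]]]]]]]] := HA.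
move=> xx0; apply: nrm_eq0; apply/eqP.
by rewrite -sqrf_eq0 -nrm_star xx0 Cstar_nrm0.
Qed.

Lemma Cstar_mul_star_eq0 (x : A) : x * star x = 0 -> x = 0.
Proof.
have [starK _] := HA.
move=> xx0; have starx0 : star x = 0 by apply: Cstar_star_mul_eq0; rewrite starK.
by rewrite -[x]starK starx0 Cstar_star0.
Qed.

End CstarAlgebra.

Theorem lemma3p1 (R : realType) (B C : algType R[i])
    (starB : B -> B) (nrmB : B -> R) (starC : C -> C) (nrmC : C -> R)
    (HB : is_unital_Cstar starB nrmB) (HC : is_unital_Cstar starC nrmC)
    (phi psi : B -> C)
    (Hphi : is_star_hom starB starC phi) (Hpsi : is_star_hom starB starC psi)
    (phi_surj : forall y : C, exists x : B, phi x = y)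
    (psi_surj : forall y : C, exists x : B, psi x = y)
    (Hcenter : trivial_center C)
    (c : C) (Hc : forall b : B, phi b * c = c * psi b) :
  invertible c \/ c = 0.
Proof.
have [starK [_ [_ [starM _]]]] := HC.
case: Hphi => _ _ _ phi_star; case: Hpsi => _ _ _ psi_star.
have Hd := intertwiner_star starK starM phi_star psi_star Hc.
have [a cd] := Hcenter _ (intertwiners_mul_central Hc Hd phi_surj).
have [b dc] := Hcenter _ (intertwiners_mul_central (fun x => esym (Hd x))
                                                 (fun x => esym (Hc x)) psi_surj).
have [a0|a_neq0] := eqVneq a 0.
  by right; apply: (Cstar_mul_star_eq0 HC); rewrite cd a0 scale0r.
have [b0|b_neq0] := eqVneq b 0.
  by right; apply: (Cstar_star_mul_eq0 HC); rewrite dc b0 scale0r.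
by left; apply: (invertible_of_scalar_products a_neq0 b_neq0 cd dc).
Qed.
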